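(* Let $T$ (failure time) and $C$ (censoring time) be random times with true CDFs $F^\star$ and $G^\star$, possibly conditional on features $X$, satisfying random censoring $T \perp C \mid X$, and observed only through $(X, U, \Delta)$ with $U=\min(T,C)$ and $\Delta=\mathbf{1}\{T\le C\}$. Let $\{F_{\theta_T}:\theta_T\in\Theta_T\}$ and $\{G_{\theta_C}:\theta_C\in\Theta_C\}$ be differentiable parametric model families for the failure and censoring distributions, and assume there exist $\theta_T^\star\in\Theta_T$ and $\theta_C^\star\in\Theta_C$ with $F^\star=F_{\theta_T^\star}$ and $G^\star=G_{\theta_C^\star}$. Let $L$ be a proper loss, and let $L_I$ be its inverse-probability-of-censoring-weighted (IPCW) form, i.e. a functional computed from the observed data $(X,U,\Delta)$ such that $L_I(F_{\theta_T};G^\star)=L(F_{\theta_T})$ and $L_I(G_{\theta_C};F^\star)=L(G_{\theta_C})$ for all $\theta_T,\theta_C$. Define the two player losses $$\ell_F(\theta)=L_I(F_{\theta_T};G_{\theta_C}),\qquad \ell_G(\theta)=L_I(G_{\theta_C};F_{\theta_T}),\qquad \theta=(\theta_T,\theta_C),$$ where the failure player controls $\theta_T$ and minimizes $\ell_F$, and the censor player controls $\theta_C$ and minimizes $\ell_G$. Assume the losses are only computed at times for which the positivity conditions hold. Then $(\theta_T^\star,\theta_C^\star)$ is a stationary point of this game, i.e. $\nabla_{\theta_T}\ell_F(\theta_T^\star,\theta_C^\star)=0$ and $\nabla_{\theta_C}\ell_G(\theta_T^\star,\theta_C^\star)=0$.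
   Context: A loss $L$ on distributions is proper if it is minimized at the true data-generating distribution. Notation: $\overline{F}=1-F$, $\overline{G}=1-G$, $\overline{G}(t^-)=P(C\ge t)$. Positivity conditions: there is a truncation time $t_{\max}$ and $\epsilon>0$ such that for all $x$ and all $t\le t_{\max}$ with $f(t\mid x)>0$ (failure density/mass), $\overline{G}(t^-\mid x)\ge\epsilon$; and symmetrically, for all $x$ and all $t\le t_{\max}$ with $g(t\mid x)>0$ (censoring density/mass), $\overline{F}(t\mid x)\ge \epsilon$. A stationary point of a differentiable game is a parameter at which the simultaneous gradient $\xi(\theta)=(\nabla_{\theta_T}\ell_F,\nabla_{\theta_C}\ell_G)$ vanishes. Example of such a game (IPCW Brier score at time $t$): $\ell_F^t=\mathbb{E}\big[\overline{F}_{\theta_T}(t)^2\Delta\mathbf{1}\{U\le t\}/\overline{G}_{\theta_C}(U^-)+F_{\theta_T}(t)^2\mathbf{1}\{U>t\}/\overline{G}_{\theta_C}(t)\big]$ and $\ell_G^t=\mathbb{E}\big[\overline{G}_{\theta_C}(t)^2(1-\Delta)\mathbf{1}\{U\le t\}/\overline{F}_{\theta_T}(U)+G_{\theta_C}(t)^2\mathbf{1}\{U>t\}/\overline{F}_{\theta_T}(t)\big]$; the result applies to single-time games, summed games over several times, and multi-player games with one failure and one censor player per time. *)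

From HB Require Import structures.
From mathcomp Require Import all_boot all_order all_algebra.
From mathcomp Require Import all_classical all_reals all_analysis.
Set Implicit Arguments. Unset Strict Implicit. Unset Printing Implicit Defensive.
Import Order.TTheory GRing.Theory Num.Theory.
Import numFieldNormedType.Exports.
Local Open Scope ring_scope.

(** Conditional CDFs: x |-> (t |-> P(time <= t | X = x)), features in [Xf]. *)
Definition condcdf (R : realType) (Xf : Type) := Xf -> R -> R.

(** A loss on distributions, [L Q P] = loss of candidate Q when the data are
    generated by P, is proper if it is minimized at the true distribution. *)
Definition proper_loss (R : realType) (Xf : Type) (L : condcdf R Xf -> condcdf R Xf -> R) :=
  forall P Q : condcdf R Xf, L P P <= L Q P.

Definition grad (R : realType) (p : nat) (f : 'rV[R]_p -> R) (x : 'rV[R]_p)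
  : 'rV[R]_p := \row_(i < p) derive f x (delta_mx 0 i).

From HB Require Import structures.
From mathcomp Require Import all_boot all_order all_algebra.
From mathcomp Require Import all_classical all_reals all_analysis.
Set Implicit Arguments. Unset Strict Implicit. Unset Printing Implicit Defensive.
Import Order.TTheory GRing.Theory Num.Theory.
Import numFieldNormedType.Exports.
Local Open Scope classical_set_scope.
Local Open Scope ring_scope.

(** Once the opponent sits at its true parameter, the IPCW loss of each player
    is the proper loss [L] itself, so the true parameter minimizes it over the
    open parameter set; by Fermat's rule its gradient vanishes there. *)

Lemma derive_local_min (R : realFieldType) (V : normedModType R) (f : V -> R)
    (x v : V) :
  (\forall y \near x, f x <= f y) -> derivable f x v -> 'D_v f x = 0.
Proof.
move=> xmin dfx.
pose q h := h^-1 *: ((f \o shift x) (h *: v) - f x).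
have line_to_x : (fun h : R => h *: v + x) @ (0 : R) --> x.
  rewrite -[x in _ --> x](add0r x) -(scale0r v).
  by apply: cvgD; [exact: scalel_continuous | exact: cvg_cst].
have near_min : \forall h \near (0 : R), 0 <= f (h *: v + x) - f x.
  by near=> h; rewrite subr_ge0; near: h; exact: line_to_x _ xmin.
have qcvg : cvg (q @ 0^') := dfx.
apply/eqP; rewrite eq_le; apply/andP; split.
- rewrite /derive -/q (cvg_at_leftE q) //; apply: limr_le.
    exact: cvgP _ (cvg_dnbhs_at_left qcvg).
  near=> h; rewrite /q /= /shift; apply: mulr_le0_ge0.
    by rewrite invr_le0 ltW //; near: h; exact: nbhs_left_lt.
  by near: h; apply: cvg_within.
- rewrite /derive -/q (cvg_at_rightE q) //; apply: limr_ge.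
    exact: cvgP _ (cvg_dnbhs_at_right qcvg).
  near=> h; rewrite /q /= /shift; apply: mulr_ge0.
    by rewrite invr_ge0 ltW //; near: h; exact: nbhs_right_gt.
  by near: h; apply: cvg_within.
Unshelve. all: by end_near. Qed.

Lemma grad_local_min (R : realType) (p : nat) (f : 'rV[R]_p -> R) (x : 'rV[R]_p) :
  (\forall y \near x, f x <= f y) -> differentiable f x -> grad f x = 0.
Proof.
move=> xmin dfx; apply/rowP => i; rewrite !mxE.
exact/derive_local_min/diff_derivable.
Qed.

Lemma proper_loss_min_at_truth (R : realType) (Xf T : Type) (S : set T)
    (P : T -> condcdf R Xf) (th0 : T) (N : condcdf R Xf)
    (L LI : condcdf R Xf -> condcdf R Xf -> R) :
  proper_loss L -> S th0 ->
  (forall th, S th -> LI (P th) N = L (P th) (P th0)) ->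
  forall th, S th -> LI (P th0) N <= LI (P th) N.
Proof. by move=> pL S0 LIE th Sth; rewrite !LIE //; exact: pL. Qed.

Theorem proposition1 (R : realType) (Xf : Type) (pT pC : nat)
  (ThT : set 'rV[R]_pT) (ThC : set 'rV[R]_pC)
  (F : 'rV[R]_pT -> condcdf R Xf) (G : 'rV[R]_pC -> condcdf R Xf)
  (Fstar Gstar : condcdf R Xf) (thTstar : 'rV[R]_pT) (thCstar : 'rV[R]_pC)
  (L : condcdf R Xf -> condcdf R Xf -> R)
  (LIT LIC : condcdf R Xf -> condcdf R Xf -> R) :
  open ThT -> open ThC ->
  ThT thTstar -> ThC thCstar ->
  Fstar = F thTstar -> Gstar = G thCstar ->
  proper_loss L ->
  (forall thT, ThT thT -> LIT (F thT) Gstar = L (F thT) Fstar) ->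
  (forall thC, ThC thC -> LIC (G thC) Fstar = L (G thC) Gstar) ->
  (forall thT thC, ThT thT -> ThC thC ->
     differentiable (fun t => LIT (F t) (G thC)) thT) ->
  (forall thT thC, ThT thT -> ThC thC ->
     differentiable (fun c => LIC (G c) (F thT)) thC) ->
  let ellF := fun thT thC => LIT (F thT) (G thC) in
  let ellG := fun thT thC => LIC (G thC) (F thT) in
  grad (fun t => ellF t thCstar) thTstar = 0 /\
  grad (fun c => ellG thTstar c) thCstar = 0.
Proof.
move=> oT oC sT sC eF eG pL hT hC dT dC ellF ellG.
rewrite eF in hT; rewrite eG in hC.
split; apply: grad_local_min.
- near=> t; rewrite /ellF -eG.
  apply: (proper_loss_min_at_truth pL sT hT).
  by near: t; apply: open_nbhs_nbhs; split.
- exact: dT.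
- near=> c; rewrite /ellG -eF.
  apply: (proper_loss_min_at_truth pL sC hC).
  by near: c; apply: open_nbhs_nbhs; split.
- exact: dC.
Unshelve. all: by end_near. Qed.
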